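(* Let $d_1,d_2,d_3\ge2$, $A\in\mathbb{R}^{d_1\times d_2}_{>0}$ and $B\in\mathbb{R}^{d_2\times d_3}_{>0}$ (all entries strictly positive). Then \[ R(AB)\le \Phi\bigl(R(A),R(B)\bigr). \]
   Context: For a matrix $A=(a_{ik})\in\mathbb{R}^{d_1\times d_2}$ with strictly positive entries, its distortion is $R(A)=\max_{1\le i,j\le d_1,\ 1\le k,\ell\le d_2}\frac{a_{ik}a_{j\ell}}{a_{i\ell}a_{jk}}$ (so $R(A)\ge1$). The envelope function is $\Phi(\alpha,\beta)=\left(\frac{1+\sqrt{\alpha\beta}}{\sqrt{\alpha}+\sqrt{\beta}}\right)^2$ for $\alpha,\beta\ge1$. *)

From mathcomp Require Import all_boot all_order all_algebra.
Set Implicit Arguments. Unset Strict Implicit. Unset Printing Implicit Defensive.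
Import Order.TTheory GRing.Theory Num.Theory.
Local Open Scope ring_scope.

(* All ratios are positive, so seeding the max with 0
   is harmless (the max is attained at some index quadruple). *)
Definition distortion (R : rcfType) (m n : nat) (A : 'M[R]_(m, n)) : R :=
  \big[Num.max/0]_(i < m) \big[Num.max/0]_(j < m)
   \big[Num.max/0]_(k < n) \big[Num.max/0]_(l < n)
     (A i k * A j l / (A i l * A j k)).

Definition Phi (R : rcfType) (a b : R) : R :=
  ((1 + Num.sqrt (a * b)) / (Num.sqrt a + Num.sqrt b)) ^+ 2.

Definition positive_mx (R : rcfType) (m n : nat) (A : 'M[R]_(m, n)) : Prop :=
  forall i j, 0 < A i j.

From mathcomp Require Import all_boot all_order all_algebra.
From mathcomp Require Import ring lra.
Import Order.TTheory GRing.Theory Num.Theory.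
Set Implicit Arguments.
Unset Strict Implicit.
Unset Printing Implicit Defensive.
Local Open Scope ring_scope.

(* Fix rows i, j of A and columns k, l of B.  With weights w m = A j m * B m l
   and ratios p m = A i m / A j m, q m = B m k / B m l, the cross ratio of A *m B
   at (i, j, k, l) is (Σ w)(Σ w p q) / ((Σ w p)(Σ w q)), which is invariant under
   rescaling p and q.  Rescaled, p ranges in [1, R(A)] and q in [1, R(B)], so
   (p - 1)(R(B) - q) >= 0 and (R(A) - p)(q - 1) >= 0 bound Σ w p q linearly in
   Σ w p and Σ w q; maximizing the resulting bound on the ratio over the
   admissible rectangle for (Σ w p, Σ w q) gives Φ(R(A), R(B)). *)

Section MomentInequality.
Variable R : realFieldType.

Lemma moment_ineq_half (a b S P Q X : R) :
  1 <= a -> 1 <= b -> 0 <= S -> S <= P -> P <= a ^+ 2 * S -> S <= Q ->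
  (b ^+ 2 - 1) * (P - S) <= (a ^+ 2 - 1) * (Q - S) ->
  X <= b ^+ 2 * P + Q - b ^+ 2 * S ->
  S * X * (a + b) ^+ 2 <= (1 + a * b) ^+ 2 * P * Q.
Proof.
move=> a1 b1 S0 SP Pa SQ hPQ hX.
have a21 : 0 <= a ^+ 2 - 1 by nra.
have b21 : 0 <= b ^+ 2 - 1 by nra.
have gap : (a + b) ^+ 2 * S <= (1 + a * b) ^+ 2 * P.
  have -> : (1 + a * b) ^+ 2 = (a + b) ^+ 2 + (a ^+ 2 - 1) * (b ^+ 2 - 1) by ring.
  have : 0 <= (a ^+ 2 - 1) * (b ^+ 2 - 1) * P by rewrite !mulr_ge0 //; lra.
  have : (a + b) ^+ 2 * S <= (a + b) ^+ 2 * P by rewrite ler_wpM2l ?sqr_ge0.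
  lra.
set D := (1 + a * b) ^+ 2 * P * Q - (a + b) ^+ 2 * S * (b ^+ 2 * P + Q - b ^+ 2 * S).
have key : 0 <= (a ^+ 2 - 1) * D.
  have -> : (a ^+ 2 - 1) * D =
    ((1 + a * b) ^+ 2 * P - (a + b) ^+ 2 * S) *
      ((a ^+ 2 - 1) * (Q - S) - (b ^+ 2 - 1) * (P - S))
    + (b ^+ 2 - 1) * ((1 + a * b) * P - a * (a + b) * S) ^+ 2 by rewrite /D; ring.
  by apply: addr_ge0; apply: mulr_ge0; rewrite // ?sqr_ge0 ?subr_ge0.
have : (a + b) ^+ 2 * S * X <= (a + b) ^+ 2 * S * (b ^+ 2 * P + Q - b ^+ 2 * S).
  by rewrite ler_wpM2l // mulr_ge0 ?sqr_ge0.
have [a_gt1|a_le1] := ltrP 1 a.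
  have a21_gt0 : 0 < a ^+ 2 - 1 by nra.
  by rewrite pmulr_rge0 // /D in key; lra.
have a_eq1 : a = 1 by lra.
have P_eqS : P = S by move: Pa; rewrite a_eq1 expr1n mul1r; lra.
rewrite a_eq1 P_eqS; lra.
Qed.

Lemma moment_ineq (a b S P Q X : R) :
  1 <= a -> 1 <= b -> 0 <= S ->
  S <= P <= a ^+ 2 * S -> S <= Q <= b ^+ 2 * S ->
  X <= b ^+ 2 * P + Q - b ^+ 2 * S -> X <= P + a ^+ 2 * Q - a ^+ 2 * S ->
  S * X * (a + b) ^+ 2 <= (1 + a * b) ^+ 2 * P * Q.
Proof.
move=> a1 b1 S0 /andP[SP Pa] /andP[SQ Qb] hXb hXa.
have [hPQ|hQP] := lerP ((b ^+ 2 - 1) * (P - S)) ((a ^+ 2 - 1) * (Q - S)).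
  exact: moment_ineq_half.
have hXa' : X <= a ^+ 2 * Q + P - a ^+ 2 * S by rewrite [_ + P]addrC.
have := moment_ineq_half b1 a1 S0 SQ Qb SP (ltW hQP) hXa'.
lra.
Qed.

Lemma weighted_mean_ineq (I : finType) (a b : R) (w p q : I -> R) :
  1 <= a -> 1 <= b -> (forall i, 0 <= w i) ->
  (forall i, 1 <= p i <= a ^+ 2) -> (forall i, 1 <= q i <= b ^+ 2) ->
  (\sum_i w i) * (\sum_i w i * p i * q i) * (a + b) ^+ 2
    <= (1 + a * b) ^+ 2 * (\sum_i w i * p i) * (\sum_i w i * q i).
Proof.
move=> a1 b1 w0 hp hq.
apply: moment_ineq => //; first exact: sumr_ge0.
- rewrite mulr_sumr; apply/andP; split; apply: ler_sum => i _;
    have /andP[p1 pa] := hp i; first by rewrite ler_peMr.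
  by rewrite [_ ^+ 2 * _]mulrC ler_wpM2l.
- rewrite mulr_sumr; apply/andP; split; apply: ler_sum => i _;
    have /andP[q1 qb] := hq i; first by rewrite ler_peMr.
  by rewrite [_ ^+ 2 * _]mulrC ler_wpM2l.
- rewrite -subr_ge0.
  have -> : b ^+ 2 * (\sum_i w i * p i) + (\sum_i w i * q i)
      - b ^+ 2 * (\sum_i w i) - (\sum_i w i * p i * q i) =
    \sum_i w i * (p i - 1) * (b ^+ 2 - q i).
    rewrite !mulr_sumr -big_split -!sumrB /=.
    by apply: eq_bigr => i _; ring.
  apply: sumr_ge0 => i _; have /andP[p1 _] := hp i; have /andP[_ qb] := hq i.
  by rewrite !mulr_ge0 // subr_ge0.
- rewrite -subr_ge0.
  have -> : (\sum_i w i * p i) + a ^+ 2 * (\sum_i w i * q i)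
      - a ^+ 2 * (\sum_i w i) - (\sum_i w i * p i * q i) =
    \sum_i w i * (a ^+ 2 - p i) * (q i - 1).
    rewrite !mulr_sumr -big_split -!sumrB /=.
    by apply: eq_bigr => i _; ring.
  apply: sumr_ge0 => i _; have /andP[_ pa] := hp i; have /andP[q1 _] := hq i.
  by rewrite !mulr_ge0 // subr_ge0.
Qed.

Lemma exists_ratio_scale (I : finType) (i0 : I) (c : R) (x y : I -> R) :
  (forall m, 0 < x m) -> (forall m, 0 < y m) ->
  (forall m n, x m * y n / (x n * y m) <= c) ->
  exists2 s, 0 < s & forall m, 1 <= x m / (s * y m) <= c.
Proof.
move=> x0 y0 hc.
have [m0 _ m0_min] := arg_minP (fun m => x m / y m) (isT : xpredT i0).
exists (x m0 / y m0) => [|m]; first exact: divr_gt0.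
have -> : x m / (x m0 / y m0 * y m) = x m * y m0 / (x m0 * y m).
  by field; rewrite !gt_eqF.
rewrite hc andbT ler_pdivlMr ?mulr_gt0 // mul1r.
by have := m0_min m isT; rewrite ler_pdivrMr // mulrAC ler_pdivlMr.
Qed.

End MomentInequality.

Section Distortion.
Variable R : rcfType.

Lemma Phi_sqrt (alpha beta : R) : 0 <= alpha ->
  Phi alpha beta = (1 + Num.sqrt alpha * Num.sqrt beta) ^+ 2
                   / (Num.sqrt alpha + Num.sqrt beta) ^+ 2.
Proof. by move=> alpha0; rewrite /Phi sqrtrM // expr_div_n. Qed.

Lemma weighted_mean_Phi (I : finType) (alpha beta : R) (w p q : I -> R) :
  1 <= alpha -> 1 <= beta -> (forall i, 0 <= w i) ->
  (forall i, 1 <= p i <= alpha) -> (forall i, 1 <= q i <= beta) ->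
  (\sum_i w i) * (\sum_i w i * p i * q i)
    <= Phi alpha beta * ((\sum_i w i * p i) * (\sum_i w i * q i)).
Proof.
move=> alpha1 beta1 w0 hp hq.
have sqrt_ge1 (c : R) : 1 <= c -> 1 <= Num.sqrt c by move=> c1; rewrite -sqrtr1 ler_wsqrtr.
have sqr_sqrt (c : R) : 1 <= c -> Num.sqrt c ^+ 2 = c.
  by move=> c1; rewrite sqr_sqrtr // (le_trans ler01).
have a1 := sqrt_ge1 _ alpha1; have b1 := sqrt_ge1 _ beta1.
rewrite Phi_sqrt ?(le_trans ler01) // [_ / _ * _]mulrAC ler_pdivlMr; last first.
  by rewrite exprn_gt0 // (lt_le_trans ltr01) // ler_wpDr // (le_trans ler01).
by rewrite [X in _ <= X]mulrA; apply: weighted_mean_ineq => // i; rewrite sqr_sqrt.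
Qed.

Lemma cross_sum_le_Phi (I : finType) (alpha beta : R) (x y u v : I -> R) :
  1 <= alpha -> 1 <= beta ->
  (forall m, 0 < x m) -> (forall m, 0 < y m) ->
  (forall m, 0 < u m) -> (forall m, 0 < v m) ->
  (forall m n, x m * y n / (x n * y m) <= alpha) ->
  (forall m n, u m * v n / (v m * u n) <= beta) ->
  (\sum_m x m * u m) * (\sum_m y m * v m)
    <= Phi alpha beta * ((\sum_m x m * v m) * (\sum_m y m * u m)).
Proof.
move=> alpha1 beta1 x0 y0 u0 v0 hx hu.
have [i0 _|I0] := pickP (fun _ : I => true); last first.
  by rewrite !big1 ?mul0r ?mulr0 // => m; have := I0 m.
have [s s0 hs] := exists_ratio_scale i0 x0 y0 hx.
have [t t0 ht] : exists2 t, 0 < t & forall m, 1 <= u m / (t * v m) <= beta.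
  by apply: (exists_ratio_scale i0 u0 v0) => m n; rewrite [u n * _]mulrC.
have wv0 m : 0 <= y m * v m by rewrite ltW ?mulr_gt0.
have := weighted_mean_Phi alpha1 beta1 wv0 hs ht.
have -> : \sum_m y m * v m * (x m / (s * y m)) = (\sum_m x m * v m) / s.
  by rewrite mulr_suml; apply: eq_bigr => m _; field; rewrite !gt_eqF.
have -> : \sum_m y m * v m * (u m / (t * v m)) = (\sum_m y m * u m) / t.
  by rewrite mulr_suml; apply: eq_bigr => m _; field; rewrite !gt_eqF.
have -> : \sum_m y m * v m * (x m / (s * y m)) * (u m / (t * v m)) =
    (\sum_m x m * u m) / (s * t).
  by rewrite mulr_suml; apply: eq_bigr => m _; field; rewrite !gt_eqF.
set Sxu := \sum_m x m * u m; set Syv := \sum_m y m * v m.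
set Sxv := \sum_m x m * v m; set Syu := \sum_m y m * u m.
have st0 : 0 < s * t by rewrite mulr_gt0.
rewrite -(ler_pM2r st0).
have -> : Syv * (Sxu / (s * t)) * (s * t) = Sxu * Syv by field; rewrite !gt_eqF.
by have -> : Phi alpha beta * (Sxv / s * (Syu / t)) * (s * t) = Phi alpha beta * (Sxv * Syu)
  by field; rewrite !gt_eqF.
Qed.

Lemma distortion_ge_ratio m n (A : 'M[R]_(m, n)) i j k l :
  A i k * A j l / (A i l * A j k) <= distortion A.
Proof.
apply: (bigmax_sup i) => //; apply: (bigmax_sup j) => //.
by apply: (bigmax_sup k) => //; apply: le_bigmax.
Qed.

Lemma distortion_ge1 m n (A : 'M[R]_(m, n)) (i : 'I_m) (k : 'I_n) :
  positive_mx A -> 1 <= distortion A.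
Proof.
move=> A0; have := distortion_ge_ratio A i i k k.
by rewrite divff // gt_eqF // mulr_gt0.
Qed.

Lemma distortion_le m n (A : 'M[R]_(m, n)) (c : R) : 0 <= c ->
  (forall i j k l, A i k * A j l / (A i l * A j k) <= c) -> distortion A <= c.
Proof. by move=> c0 hc; do 4!(apply: bigmax_le => // ? _). Qed.

Lemma positive_mulmx m n p (A : 'M[R]_(m, n)) (B : 'M[R]_(n, p)) (j0 : 'I_n) :
  positive_mx A -> positive_mx B -> positive_mx (A *m B).
Proof.
move=> A0 B0 i k; rewrite mxE (bigD1 j0) //= ltr_wpDr ?mulr_gt0 //.
by apply: sumr_ge0 => j _; rewrite ltW ?mulr_gt0.
Qed.

End Distortion.

Theorem mainTheorem9 (R : rcfType) (d1 d2 d3 : nat)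
  (hd1 : (2 <= d1)%N) (hd2 : (2 <= d2)%N) (hd3 : (2 <= d3)%N)
  (A : 'M[R]_(d1, d2)) (B : 'M[R]_(d2, d3))
  (hA : positive_mx A) (hB : positive_mx B) :
  distortion (A *m B) <= Phi (distortion A) (distortion B).
Proof.
pose i0 : 'I_d1 := Ordinal (ltnW hd1).
pose k0 : 'I_d2 := Ordinal (ltnW hd2).
pose l0 : 'I_d3 := Ordinal (ltnW hd3).
have AB0 := positive_mulmx k0 hA hB.
apply: distortion_le => [|i j k l]; first exact: sqr_ge0.
rewrite ler_pdivrMr ?mulr_gt0 // !mxE.
apply: cross_sum_le_Phi => // [||m n|m n].
- exact: distortion_ge1 i0 k0 hA.
- exact: distortion_ge1 k0 l0 hB.
- exact: distortion_ge_ratio.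
- exact: distortion_ge_ratio.
Qed.
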